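(* Let $U=\{u_1,\dots,u_{2^m}\}\subseteq\mathbb{F}_2^n\setminus\{0\}$ be a set of $2^m$ distinct nonzero vectors, let $B:\mathbb{F}_2^n\to\mathbb{F}_2^m$ be a uniformly random linear map, fix $y\in\mathbb{F}_2^m$, and let $Z_y:=|\{i:Bu_i=y\}|$. Then for every integer $a\ge1$, \[ \Pr[Z_y>2^a-2]\le\gamma^{-1}2^{-a^2}, \] where $\gamma:=\prod_{j=1}^\infty(1-2^{-j})$.
   Context: A uniformly random linear map $\mathbb{F}_2^n\to\mathbb{F}_2^m$ is one chosen uniformly among all linear maps. *)

From HB Require Import structures.
From mathcomp Require Import all_boot all_order all_algebra.
From mathcomp Require Import all_classical all_reals all_analysis.
Set Implicit Arguments. Unset Strict Implicit. Unset Printing Implicit Defensive.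
Import Order.TTheory GRing.Theory Num.Theory numFieldTopology.Exports numFieldNormedType.Exports.
Local Open Scope ring_scope.

(* Vectors of F_2^n are row vectors 'rV['F_2]_n; a linear map F_2^n -> F_2^m
   is represented by its matrix B : 'M['F_2]_(n, m), acting by v |-> v *m B.
   The uniformly random linear map is the uniform distribution on the finite
   type of all such matrices (linear maps <-> matrices bijectively). *)

Definition gamma_const (R : realType) : R :=
  limn (fun N : nat => \prod_(j < N) (1 - (2%:R ^- j.+1) : R)).

Definition Zcount (n m : nat) (U : {set 'rV['F_2]_n}) (y : 'rV['F_2]_m)
  (B : 'M['F_2]_(n, m)) : nat := #|[set u in U | u *m B == y]|.

Definition prob_linmap (R : realType) (n m : nat) (E : pred 'M['F_2]_(n, m)) : R :=
  (#|[set B | E B]|%:R) / (#|{: 'M['F_2]_(n, m)}|%:R).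

From HB Require Import structures.
From mathcomp Require Import all_boot all_order all_algebra.
From mathcomp Require Import all_classical all_reals all_analysis.
From mathcomp Require Import zify lra.
Import Order.TTheory GRing.Theory Num.Theory.
Import numFieldTopology.Exports numFieldNormedType.Exports.
Set Implicit Arguments. Unset Strict Implicit. Unset Printing Implicit Defensive.
Local Open Scope ring_scope.

(* Double counting pairs (B, T), T an a x n matrix whose rows are linearly
   independent vectors of U mapped to y by B.  When Z_y(B) >= 2^a - 1, the
   preimage of y in U avoids 0, so it contains at least
   prod_{i<a} (2^a - 2^i) such T: the (i+1)-th row only has to avoid the
   2^i - 1 nonzero vectors spanned by the previous ones.  Conversely each of
   the at most |U|^a = 2^(am) such T is sent to (y, ..., y) by exactly
   2^((n-a)m) matrices B.  Finally
   prod_{i<a} (2^a - 2^i) = 2^(a^2) prod_{j<=a} (1 - 2^-j) >= 2^(a^2) gamma. *)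

Section Frames.
Variables (F : finFieldType) (n : nat).
Local Notation q := #|F|.

Definition frames k (S : {set 'rV[F]_n}) : {set 'M[F]_(k, n)} :=
  [set T | row_free T && [forall i, row i T \in S]].

Definition span k (T : 'M[F]_(k, n)) : {set 'rV[F]_n} := [set v | (v <= T)%MS].

Lemma card_span_le k (T : 'M[F]_(k, n)) : (#|span T| <= q ^ k)%N.
Proof.
apply: (@leq_trans #|[set w *m T | w : 'rV[F]_k]|).
  apply/subset_leq_card/fintype.subsetP => v; rewrite inE => /submxP[w ->].
  exact: imset_f.
by apply: leq_trans (leq_imset_card _ _) _; rewrite card_mx mul1n.
Qed.

Lemma row_free_col_mx_rV k (v : 'rV[F]_n) (T : 'M[F]_(k, n)) :
  row_free T -> row_free (col_mx v T) = ~~ (v <= T)%MS.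
Proof.
move=> freeT; rewrite /row_free eqn_leq rank_leq_row /=.
rewrite -(leq_add2r (\rank (v :&: T)%MS)) -addsmxE mxrank_sum_cap (eqnP freeT).
rewrite addnAC leq_add2r (ltn_leqif (mxrank_leqif_sup _)) ?capmxSl //.
by rewrite sub_capmx submx_refl.
Qed.

Lemma col_mx_frames k (S : {set 'rV[F]_n}) (v : 'rV[F]_n) (T : 'M[F]_(k, n)) :
  T \in frames k S -> v \in S -> ~~ (v <= T)%MS -> col_mx v T \in frames k.+1 S.
Proof.
rewrite !inE => /andP[freeT /forallP rowsT] vS vT.
rewrite row_free_col_mx_rV // vT; apply/forallP => i.
rewrite -(splitK (i : 'I_(1 + k))); case: (fintype.split _) => j /=.
  rewrite (@rowKu _ 1); suff -> : row j v = v by [].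
  by apply/rowP => l; rewrite mxE (ord1 j).
by rewrite (@rowKd _ 1).
Qed.

Lemma card_setD_span_ge k (S : {set 'rV[F]_n}) (T : 'M[F]_(k, n)) :
  0 \notin S -> (#|S| - (q ^ k - 1) <= #|S :\: span T|)%N.
Proof.
move=> S0; have : (#|S :&: span T| < #|span T|)%N.
  apply/proper_card/properP; split; first exact: subsetIr.
  by exists 0; rewrite !inE ?sub0mx ?(negbTE S0).
have := card_span_le T; have := cardsID (span T) S; lia.
Qed.

Lemma card_frames_succ_ge k (S : {set 'rV[F]_n}) :
  (\sum_(T in frames k S) #|S :\: span T| <= #|frames k.+1 S|)%N.
Proof.
pose P := [set p : 'M[F]_(k, n) * 'rV[F]_n | (p.1 \in frames k S) && (p.2 \in S :\: span p.1)].
have -> : (\sum_(T in frames k S) #|S :\: span T| = #|P|)%N.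
  under eq_bigr do rewrite -sum1_card.
  by rewrite pair_big_dep /= -sum1_card; apply: eq_bigl => p; rewrite !inE.
have col_inj : injective (fun p : 'M[F]_(k, n) * 'rV[F]_n => col_mx p.2 p.1).
  by move=> [T1 v1] [T2 v2] /eq_col_mx /= [-> ->].
rewrite -(card_imset _ col_inj); apply/subset_leq_card/fintype.subsetP => M.
case/imsetP => -[T v]; rewrite inE /= => /andP[Tk /setDP[vS]]; rewrite inE => vT ->.
exact: col_mx_frames.
Qed.

Lemma card_frames_ge k (S : {set 'rV[F]_n}) :
  0 \notin S -> (\prod_(i < k) (#|S| - (q ^ i - 1)) <= #|frames k S|)%N.
Proof.
move=> S0; elim: k => [|k IHk].
  rewrite big_ord0 card_gt0; apply/set0Pn; exists 0.
  by rewrite !inE /row_free mxrank0; apply/forallP => -[].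
rewrite big_ord_recr /=; apply: leq_trans (card_frames_succ_ge k S).
apply: leq_trans (leq_mul IHk (leqnn _)) _.
by rewrite -sum_nat_const leq_sum // => T _; apply: card_setD_span_ge.
Qed.

Lemma card_frames_le k (S : {set 'rV[F]_n}) : (#|frames k S| <= #|S| ^ k)%N.
Proof.
have rows_inj : injective (fun T : 'M[F]_(k, n) => [ffun i => row i T]).
  by move=> T1 T2 /ffunP eqT; apply/row_matrixP => i; have := eqT i; rewrite !ffunE.
rewrite -(card_imset _ rows_inj) -[k in (_ ^ k)%N]card_ord -card_ffun_on.
apply/subset_leq_card/fintype.subsetP => g /imsetP[T]; rewrite inE => /andP[_ /forallP rowsT] ->.
by apply/ffun_onP => i; rewrite ffunE.
Qed.

End Frames.

Section LinearSystems.
Variables (F : finFieldType) (a n m : nat) (T : 'M[F]_(a, n)).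
Hypothesis freeT : row_free T.
Local Notation solutions Y := [set B : 'M[F]_(n, m) | T *m B == Y].

Lemma card_solutions_eq (Y Y' : 'M[F]_(a, m)) : #|solutions Y| = #|solutions Y'|.
Proof.
have card_le Y1 Y2 : (#|solutions Y1| <= #|solutions Y2|)%N.
  rewrite -(card_imset _ (addIr (pinvmx T *m (Y2 - Y1)))).
  apply/subset_leq_card/fintype.subsetP => M /imsetP[B]; rewrite !inE => /eqP TB ->.
  by rewrite mulmxDr TB mulmxA mulmxVp // mul1mx addrC subrK.
by apply/eqP; rewrite eqn_leq !card_le.
Qed.

Lemma card_solutions (Y : 'M[F]_(a, m)) :
  (#|solutions Y| * #|F| ^ (a * m) = #|F| ^ (n * m))%N.
Proof.
rewrite -!card_mx mulnC -sum_nat_const -[RHS]sum1_card (partition_big (mulmx T) predT) //=.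
apply: eq_bigr => Y' _; rewrite (card_solutions_eq Y Y') -sum1_card.
by apply: eq_bigl => B; rewrite inE.
Qed.

End LinearSystems.

Section Preimages.
Variables (F : finFieldType) (n m : nat) (U : {set 'rV[F]_n}) (y : 'rV[F]_m).
Local Notation q := #|F|.
Local Notation preimage B := [set u in U | u *m B == y].

Lemma frames_preimage k (B : 'M[F]_(n, m)) (T : 'M[F]_(k, n)) :
  (T \in frames k (preimage B)) = (T \in frames k U) && (T *m B == \matrix_(i < k) y).
Proof.
have -> : (T *m B == \matrix_(i < k) y) = [forall i, row i T *m B == y].
  apply/eqP/forallP => [TB i | rowsTB]; first by rewrite -row_mul TB rowK.
  by apply/row_matrixP => i; rewrite row_mul rowK (eqP (rowsTB i)).
rewrite !inE -andbA; congr (_ && _).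
apply/forallP/andP => [rowsT | [/forallP rowsU /forallP rowsB] i]; last first.
  by rewrite inE rowsU rowsB.
by split; apply/forallP => i; have := rowsT i; rewrite inE => /andP[].
Qed.

Lemma sum_card_frames_preimage k :
  (\sum_(B : 'M[F]_(n, m)) #|frames k (preimage B)| * q ^ (k * m) =
   #|frames k U| * q ^ (n * m))%N.
Proof.
transitivity (\sum_(T in frames k U)
    #|[set B : 'M[F]_(n, m) | T *m B == \matrix_(i < k) y]| * q ^ (k * m))%N.
  rewrite -!big_distrl /=; congr (_ * _)%N.
  under eq_bigr do rewrite -sum1_card.
  rewrite (exchange_big_dep (mem (frames k U))) /= => [|B T _]; last first.
    by rewrite frames_preimage => /andP[].
  apply: eq_bigr => T TU; rewrite sum1dep_card; apply: eq_card => B.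
  by rewrite [B \in _]inE [B \in _]inE frames_preimage TU.
rewrite -sum_nat_const; apply: eq_bigr => T; rewrite inE => /andP[freeT _].
exact: card_solutions.
Qed.

Lemma card_large_preimages_le a :
  (#|U| <= q ^ m)%N -> 0 \notin U ->
  (\prod_(i < a) (q ^ a - q ^ i) *
     #|[set B : 'M[F]_(n, m) | q ^ a - 1 <= #|preimage B|]| <= q ^ (n * m))%N.
Proof.
move=> HU U0; set large := [set B | _].
have q_gt0 : (0 < q)%N by apply/card_gt0P; exists 0.
rewrite -(@leq_pmul2r (q ^ (a * m))) ?expn_gt0 ?q_gt0 //.
apply: (@leq_trans (#|frames a U| * q ^ (n * m))); last first.
  rewrite mulnC leq_pmul2l ?expn_gt0 ?q_gt0 // mulnC expnM.
  apply: leq_trans (card_frames_le a U) _.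
  by case: (posnP a) => [-> | a_gt0]; rewrite ?expn0 ?leq_exp2r.
rewrite -sum_card_frames_preimage -big_distrl leq_mul //= mulnC -sum_nat_const.
rewrite [X in (_ <= X)%N](bigID (mem large)) /=.
apply: leq_trans (leq_addr _ _); apply: leq_sum => B; rewrite inE => largeB.
have preimage0 : 0 \notin preimage B by rewrite inE negb_and U0.
apply: leq_trans (card_frames_ge a preimage0); apply: leq_prod => i _.
have : (0 < q ^ i)%N by rewrite expn_gt0 q_gt0.
move: largeB; move: (q ^ a)%N (q ^ i)%N; lia.
Qed.

End Preimages.

Lemma natr_prod_expn_sub (R : numFieldType) (q a : nat) : (0 < q)%N ->
  (\prod_(i < a) (q ^ a - q ^ i))%:R =
  q%:R ^+ (a * a) * \prod_(j < a) (1 - q%:R ^- j.+1) :> R.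
Proof.
move=> q_gt0; rewrite natr_prod (reindex_inj rev_ord_inj) /=.
rewrite -[a in q%:R ^+ (_ * a)]card_ord exprM -prodr_const -big_split /=.
apply: eq_bigr => i _; have i_lt_a : (i.+1 <= a)%N := ltn_ord i.
have q0 : q%:R != 0 :> R by rewrite pnatr_eq0 -lt0n.
by rewrite natrB ?leq_pexp2l ?leq_subr // !natrX mulrBr mulr1 exprB // unitfE.
Qed.

Section EulerProduct.
Variable R : realType.
Let partial N : R := \prod_(j < N) (1 - 2%:R ^- j.+1).

Let inv_expr2_bounds N : 0 < (2%:R : R) ^- N.+1 <= 2^-1.
Proof.
rewrite invr_gt0 exprn_gt0 //= lef_pV2 ?posrE ?exprn_gt0 //.
by rewrite -[X in X <= _]expr1 ler_eXn2l // ltr1n.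
Qed.

Let partialS N : partial N.+1 = partial N * (1 - 2%:R ^- N.+1).
Proof. by rewrite /partial big_ord_recr. Qed.

Let partial_ge0 N : 0 <= partial N.
Proof.
apply: prodr_ge0 => j _; have /andP[_ le_half] := inv_expr2_bounds j; lra.
Qed.

(* The induction step is (1/4 + x)(1 - x) >= 1/4 + x/2 for 0 < x <= 1/4. *)
Let partial_lb N : 4^-1 + 2%:R ^- N.+2 <= partial N.+1.
Proof.
have inv_exprS k : 2%:R ^- k.+1 = 2^-1 * 2 ^- k :> R by rewrite exprS invfM.
elim: N => [|N IHN].
  by rewrite partialS /partial big_ord0 mul1r (inv_exprS 1%N) expr1; lra.
have /andP[y_gt0 y_le_half] := inv_expr2_bounds N.
rewrite (inv_exprS N.+1) in IHN.
rewrite partialS (inv_exprS N.+2) (inv_exprS N.+1); nra.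
Qed.

Let partial_nonincreasing : nonincreasing_seq partial.
Proof.
apply/nonincreasing_seqP => N; rewrite partialS.
have := partial_ge0 N; have /andP[x_gt0 x_le_half] := inv_expr2_bounds N; nra.
Qed.

Let partial_cvg : cvgn partial.
Proof.
apply: cvgP (nonincreasing_cvgn partial_nonincreasing _).
by exists 0 => _ [N _ <-]; apply: partial_ge0.
Qed.

Lemma gamma_const_le_partial N : gamma_const R <= partial N.
Proof. exact: nonincreasing_cvgn_ge partial_nonincreasing partial_cvg N. Qed.

Lemma gamma_const_gt0 : 0 < gamma_const R.
Proof.
apply: lt_le_trans (_ : 4^-1 <= _); first by rewrite invr_gt0.
apply: limr_ge partial_cvg _; apply: nearW => -[|N].
  by rewrite /partial big_ord0 invf_le1 ?ler1n.
by apply: le_trans (partial_lb N); rewrite lerDl invr_ge0 exprn_ge0.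
Qed.

End EulerProduct.

Unset Implicit Arguments.

Theorem corollary2p3 (R : realType) (n m : nat) (U : {set 'rV['F_2]_n})
  (HU : #|U| = (2 ^ m)%N) (HU0 : 0 \notin U) (y : 'rV['F_2]_m) (a : nat)
  (Ha : (1 <= a)%N) :
  prob_linmap R (fun B : 'M['F_2]_(n, m) => (2 ^ a - 2 < Zcount U y B)%N)
  <= (gamma_const R)^-1 * (2%:R ^- (a * a)).
Proof.
have card_F2 : #|'F_2| = 2%N by rewrite card_Fp.
have := @card_large_preimages_le _ n m U y a; rewrite card_F2 => /(_ (eq_leq HU) HU0).
have -> : [set B | (2 ^ a - 1 <= #|[set u in U | u *m B == y]|)%N] =
          [set B | (2 ^ a - 2 < Zcount U y B)%N].
  apply/setP => B; rewrite !inE /Zcount.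
  have : (2 <= 2 ^ a)%N by rewrite -{1}(expn1 2) leq_pexp2l.
  by move: (2 ^ a)%N => q; lia.
rewrite /prob_linmap card_mx card_F2.
rewrite -(ler_nat R) natrM natr_prod_expn_sub // => count.
have gamma_gt0 := gamma_const_gt0 R; have gamma_le := gamma_const_le_partial R a.
rewrite -invfM ler_pdivrMr ?ltr0n ?expn_gt0 // mulrC ler_pdivlMr ?mulr_gt0 ?exprn_gt0 //.
apply: le_trans count; rewrite mulrC ler_wpM2r // mulrC ler_wpM2l ?exprn_ge0 //.
Qed.
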